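(* Let $\{c_n\}_{n\ge1}$ be a real sequence, $\{d_{n+1}\}_{n\ge1}$ a positive chain sequence, and let $P_0(x)=1$, $P_1(x)=x-c_1$, $P_{n+1}(x)=(x-c_{n+1})P_n(x)-d_{n+1}(x^2+1)P_{n-1}(x)$ for $n\ge1$. Let $n\ge2$. If \[ c_1>\sqrt{d_2},\quad c_j>\sqrt{d_j}+\sqrt{d_{j+1}}\ (j=2,\dots,n-1),\quad c_n>\sqrt{d_n}, \] then all zeros of $P_n$ are positive. If \[ c_1<-\sqrt{d_2},\quad c_j<-\sqrt{d_j}-\sqrt{d_{j+1}}\ (j=2,\dots,n-1),\quad c_n<-\sqrt{d_n}, \] then all zeros of $P_n$ are negative.
   Context: A sequence $\{d_{n+1}\}_{n\ge1}$ is a positive chain sequence if there is a sequence $\{g_{n+1}\}_{n\ge0}$ with $0\le g_1<1$, $0<g_n<1$ for $n\ge2$, and $d_{n+1}=(1-g_n)g_{n+1}$ for $n\ge1$. *)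

From HB Require Import structures.
From mathcomp Require Import all_boot all_order all_algebra.
From mathcomp Require Export complex.
Set Implicit Arguments. Unset Strict Implicit. Unset Printing Implicit Defensive.
Import Order.TTheory GRing.Theory Num.Theory.
Local Open Scope ring_scope.

Definition positive_chain_sequence (R : realFieldType) (d : nat -> R) : Prop :=
  exists g : nat -> R,
    [/\ 0 <= g 1%N, g 1%N < 1,
        (forall n, (2 <= n)%N -> 0 < g n /\ g n < 1)
      & (forall n, (1 <= n)%N -> d n.+1 = (1 - g n) * g n.+1)].

Fixpoint Ppair (R : ringType) (c d : nat -> R) (n : nat) : {poly R} * {poly R} :=
  match n with
  | 0 => (1, 0)
  | 1 => ('X - (c 1%N)%:P, 1)
  | m.+1 => let (p, q) := Ppair c d m in
            (('X - (c m.+1)%:P) * p - (d m.+1)%:P * ('X ^+ 2 + 1) * q, p)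
  end.

Definition P (R : ringType) (c d : nat -> R) (n : nat) : {poly R} := (Ppair c d n).1.

(* Let z be a zero of P_n and s a square root of z^2 + 1.  If s <> 0, the
   vector w_k = P_(k-1)(z) / (s^(k-1) sqrt(d_2 ... d_k)) satisfies the symmetric
   eigen-equation (z - c_k) w_k = s (sqrt(d_(k+1)) w_(k+1) + sqrt(d_k) w_(k-1)).
   Pairing it with the conjugate of w gives z N - M = s S, with N = sum |w_k|^2,
   M = sum c_k |w_k|^2 and S real.  By AM-GM, the chain sequence yields |S| <= N
   and the hypothesis on the c_k yields |S| < M; squaring away s, z is a root of a
   real quadratic whose roots are real and have the sign of M.  If s = 0 then
   z = +-i, where P_n(z) = prod (z - c_k) <> 0.  The negative case follows from
   P_n(-c; -x) = (-1)^n P_n(c; x). *)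

From HB Require Import structures.
From mathcomp Require Import all_boot all_order all_algebra.
From mathcomp Require Import complex.
From mathcomp Require Import ring lra.
Import Order.TTheory GRing.Theory Num.Theory.
Local Open Scope ring_scope.
Local Open Scope complex_scope.

Lemma PpairS (R : ringType) (c d : nat -> R) m : Ppair c d m.+2 =
  (('X - (c m.+2)%:P) * P c d m.+1 - (d m.+2)%:P * ('X ^+ 2 + 1) * (Ppair c d m.+1).2,
   P c d m.+1).
Proof.
change (Ppair c d m.+2) with (let (p, q) := Ppair c d m.+1 in
  (('X - (c m.+2)%:P) * p - (d m.+2)%:P * ('X ^+ 2 + 1) * q, p)).
by rewrite /P; case: (Ppair c d m.+1).
Qed.

Lemma P_rec (R : ringType) (c d : nat -> R) m :
  P c d m.+2 = ('X - (c m.+2)%:P) * P c d m.+1 - (d m.+2)%:P * ('X ^+ 2 + 1) * P c d m.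
Proof. by rewrite {1}/P PpairS; case: m => [|m] //; rewrite PpairS. Qed.

Definition Pval {R : rcfType} (c d : nat -> R) (z : R[i]) k :=
  (map_poly (real_complex R) (P c d k)).[z].

Section Evaluation.
Variables (R : rcfType) (c d : nat -> R) (z : R[i]).

Lemma Pval0 : Pval c d z 0 = 1.
Proof. by rewrite /Pval /P /= rmorph1 hornerC. Qed.

Lemma Pval1 : Pval c d z 1 = z - (c 1)%:C.
Proof. by rewrite /Pval /P /= rmorphB /= map_polyX map_polyC !hornerE. Qed.

Lemma PvalS m : Pval c d z m.+2 =
  (z - (c m.+2)%:C) * Pval c d z m.+1 - (d m.+2)%:C * (z ^+ 2 + 1) * Pval c d z m.
Proof.
rewrite /Pval P_rec !(rmorphB, rmorphM, rmorphD, rmorphXn, rmorph1) /=.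
by rewrite map_polyX !map_polyC !hornerE.
Qed.

Lemma subr_real_neq0 (t : R) : z ^+ 2 + 1 = 0 -> z - t%:C != 0.
Proof.
move=> z2; rewrite subr_eq0; apply/eqP => zt.
by move: z2; rewrite zt expr2 => /(congr1 (@complex.Re R)) /=; nra.
Qed.

Lemma Pval_neq0 k : z ^+ 2 + 1 = 0 -> Pval c d z k != 0.
Proof.
move=> z2; suff /(_ k)[] : forall k, Pval c d z k != 0 /\ Pval c d z k.+1 != 0 by [].
elim=> [|j [_ IHj1]]; first by rewrite Pval0 Pval1 oner_neq0 subr_real_neq0.
by split=> //; rewrite PvalS z2 mulr0 mul0r subr0 mulf_neq0 ?subr_real_neq0.
Qed.

End Evaluation.

Lemma Pval_opp (R : rcfType) (c d : nat -> R) (z : R[i]) k :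
  Pval (fun j => - c j) d (- z) k = (-1) ^+ k * Pval c d z k.
Proof.
suff /(_ k)[] : forall k, Pval (fun j => - c j) d (- z) k = (-1) ^+ k * Pval c d z k /\
    Pval (fun j => - c j) d (- z) k.+1 = (-1) ^+ k.+1 * Pval c d z k.+1 by [].
elim=> [|j [IHj IHj1]]; first by rewrite !Pval0 Pval1 Pval1 rmorphN; split; ring.
by split=> //; rewrite !PvalS IHj IHj1 rmorphN !exprS; ring.
Qed.

Lemma real_quadratic_root {R : rcfType} {al be ga : R} {z : R[i]} :
  0 <= al -> 0 < ga -> al * ga <= be ^+ 2 ->
  al%:C * z ^+ 2 - 2 * be%:C * z + ga%:C = 0 ->
  complex.Im z = 0 /\ 0 < be * complex.Re z.
Proof.
case: z => x y al_ge0 ga_gt0 disc; rewrite expr2; simpc => -[reE imE] /=.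
suff y0 : y = 0 by split => //; move: reE; rewrite y0; nra.
have /eqP : y * (al * x - be) = 0 by lra.
rewrite mulf_eq0 subr_eq0 => /orP[/eqP // | /eqP al_x].
have /eqP : al * y = 0.
  by apply/eqP; rewrite -sqrf_eq0 eq_le sqr_ge0 andbT; nra.
rewrite mulf_eq0 => /orP[/eqP al0 | /eqP //].
by move: reE; rewrite -al_x al0; lra.
Qed.

Lemma real_pos_of_sqrt_identity (R : rcfType) (z s : R[i]) (N M S : R) :
  s ^+ 2 = z ^+ 2 + 1 -> z * N%:C - M%:C = s * S%:C ->
  0 < N -> `|S| <= N -> `|S| < M -> complex.Im z = 0 /\ 0 < complex.Re z.
Proof.
move=> s2 zNM N_gt0 /ler_normlP[SN NS] /ltr_normlP[SM MS].
have quad : (N ^+ 2 - S ^+ 2)%:C * z ^+ 2 - 2 * (M * N)%:C * z + (M ^+ 2 - S ^+ 2)%:C = 0.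
  transitivity ((z * N%:C - M%:C) ^+ 2 - (s * S%:C) ^+ 2).
    by rewrite exprMn s2 !rmorphB !rmorphM /=; ring.
  by rewrite zNM subrr.
have al_ge0 : 0 <= N ^+ 2 - S ^+ 2 by nra.
have ga_gt0 : 0 < M ^+ 2 - S ^+ 2 by nra.
have disc : (N ^+ 2 - S ^+ 2) * (M ^+ 2 - S ^+ 2) <= (M * N) ^+ 2 by nra.
have [Im0] := real_quadratic_root al_ge0 ga_gt0 disc quad.
by rewrite pmulr_rgt0 ?mulr_gt0 //; lra.
Qed.

Lemma ler_dot_amgm (R : realFieldType) (a al be x y x' y' : R) :
  0 <= al -> 0 <= be -> a ^+ 2 <= al * be ->
  2 * a * (x * x' + y * y') <= al * (x ^+ 2 + y ^+ 2) + be * (x' ^+ 2 + y' ^+ 2).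
Proof.
move=> al_ge0 be_ge0 a2.
have [al0|al_gt0] := eqVneq al 0.
  have a0 : a = 0 by apply/eqP; rewrite -sqrf_eq0 eq_le sqr_ge0 andbT -(mul0r be) -al0.
  by rewrite al0 a0 mulr0 !mul0r add0r mulr_ge0 ?addr_ge0 ?sqr_ge0.
have := sqr_ge0 (al * x - a * x'); have := sqr_ge0 (al * y - a * y').
have : 0 <= (al * be - a ^+ 2) * (x' ^+ 2 + y' ^+ 2) by rewrite mulr_ge0 ?subr_ge0 ?addr_ge0 ?sqr_ge0.
nra.
Qed.

Lemma sumr_shift {V : zmodType} (F : nat -> V) n :
  \sum_(k < n) F k.+1 = \sum_(k < n) F k + (F n - F 0%N).
Proof.
rewrite -(telescope_sumr F (leq0n n)) big_mkord -big_split.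
by apply: eq_bigr => k _; rewrite /= addrCA subrr addr0.
Qed.

Lemma ltr_sum_head {R : numDomainType} (F G : nat -> R) n : (0 < n)%N ->
  F 0%N < G 0%N -> (forall k, (k < n)%N -> F k <= G k) ->
  \sum_(k < n) F k < \sum_(k < n) G k.
Proof.
case: n => // n _ lt0 le; rewrite !big_ord_recl ltr_leD //.
by apply: ler_sum => k _; apply: le.
Qed.

Definition sqnorm {R : rcfType} (u : R[i]) := complex.Re u ^+ 2 + complex.Im u ^+ 2.

Lemma conjcM_sqnorm (R : rcfType) (u : R[i]) : u^*%C * u = (sqnorm u)%:C.
Proof. by case: u => x y; rewrite /sqnorm /=; simpc; rewrite [x * y]mulrC subrr -!expr2. Qed.

Lemma add_conjcM (R : rcfType) (u v : R[i]) :
  u^*%C * v + v^*%C * u = (2 * complex.Re (u^*%C * v))%:C.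
Proof. by case: u v => x y [x' y'] /=; simpc; rewrite -complexr0; congr (_ +i* _); ring. Qed.

Lemma norm_Re_conjcM_le (R : rcfType) (a al be : R) (u v : R[i]) :
  0 <= al -> 0 <= be -> a ^+ 2 <= al * be ->
  `|2 * a * complex.Re (u^*%C * v)| <= al * sqnorm u + be * sqnorm v.
Proof.
case: u v => x y [x' y'] al_ge0 be_ge0 a2; rewrite /sqnorm /=; simpc.
rewrite ler_norml; apply/andP; split; last exact: ler_dot_amgm.
rewrite lerNl -mulrN opprD -!mulrN -[x' ^+ 2]sqrrN -[y' ^+ 2]sqrrN.
exact: ler_dot_amgm.
Qed.

Lemma sqnorm_ge0 (R : rcfType) (u : R[i]) : 0 <= sqnorm u.
Proof. by rewrite addr_ge0 ?sqr_ge0. Qed.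

Section SymmetricForm.
Variables (R : rcfType) (n : nat) (a : nat -> R) (w : nat -> R[i]).

Local Notation S := (\sum_(k < n) 2 * a k.+1 * complex.Re ((w k)^*%C * w k.+1)).

Lemma symmetric_form_identity (b : nat -> R) (s z : R[i]) :
  a 1 = 0 -> a n.+1 = 0 ->
  (forall k, (k < n)%N ->
    (z - (b k.+1)%:C) * w k.+1 = s * ((a k.+2)%:C * w k.+2 + (a k.+1)%:C * w k)) ->
  z * (\sum_(k < n) sqnorm (w k.+1))%:C - (\sum_(k < n) b k.+1 * sqnorm (w k.+1))%:C =
  s * S%:C.
Proof.
move=> a1 an1 eigen.
pose T k := (a k.+1)%:C * ((w k)^*%C * w k.+1).
have -> : z * (\sum_(k < n) sqnorm (w k.+1))%:C - (\sum_(k < n) b k.+1 * sqnorm (w k.+1))%:C =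
    \sum_(k < n) (w k.+1)^*%C * ((z - (b k.+1)%:C) * w k.+1).
  rewrite !rmorph_sum mulr_sumr -sumrB; apply: eq_bigr => k _.
  by rewrite rmorphM /= mulrCA -conjcM_sqnorm mulrBl.
rewrite (eq_bigr (fun k : 'I_n => s * (T k.+1 + (a k.+1)%:C * ((w k.+1)^*%C * w k)))); last first.
  by move=> k _; rewrite eigen // /T; ring.
rewrite -mulr_sumr big_split /= sumr_shift /T a1 an1 !mul0r subrr addr0 -big_split /=.
rewrite rmorph_sum; apply: congr1; apply: eq_bigr => k _.
by rewrite -mulrDr add_conjcM -rmorphM mulrCA mulrA.
Qed.

Lemma symmetric_form_bound (al be : nat -> R) :
  (forall k, (k < n)%N -> [/\ 0 <= al k, 0 <= be k.+1 & a k.+1 ^+ 2 <= al k * be k.+1]) ->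
  al 0%N = 0 -> 0 <= al n ->
  `|S| <= \sum_(k < n) (al k.+1 + be k.+1) * sqnorm (w k.+1).
Proof.
move=> hab al0 aln_ge0.
apply: (le_trans (ler_norm_sum _ _ _)).
apply: (@le_trans _ _ (\sum_(k < n) (al k * sqnorm (w k) + be k.+1 * sqnorm (w k.+1)))).
  by apply: ler_sum => k _; have [] := hab k (ltn_ord k); exact: norm_Re_conjcM_le.
have := sumr_shift (fun k => al k * sqnorm (w k)) n; rewrite al0 mul0r subr0 /= => shift.
have := mulr_ge0 aln_ge0 (sqnorm_ge0 _ (w n)).
under [X in _ -> _ <= X]eq_bigr do rewrite mulrDl.
rewrite !big_split /=; lra.
Qed.

End SymmetricForm.

(* Off-diagonal entries of the symmetrised Jacobi matrix, padded with zeros so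
   that the boundary entries a_1 and a_(n+1) vanish. *)
Definition offdiag {R : rcfType} (d : nat -> R) (n j : nat) : R :=
  if (2 <= j <= n)%N then Num.sqrt (d j) else 0.

Lemma offdiag_ge0 {R : rcfType} (d : nat -> R) n j : 0 <= offdiag d n j.
Proof. by rewrite /offdiag; case: ifP => // _; apply: sqrtr_ge0. Qed.

Section PositiveRoots.
Variables (R : rcfType) (c d g : nat -> R) (n : nat) (z : R[i]).
Hypothesis n_ge2 : (2 <= n)%N.
Hypotheses (g1_ge0 : 0 <= g 1%N) (g1_lt1 : g 1%N < 1).
Hypothesis g_in01 : forall k, (2 <= k)%N -> 0 < g k /\ g k < 1.
Hypothesis d_chain : forall k, (1 <= k)%N -> d k.+1 = (1 - g k) * g k.+1.

Local Notation a := (offdiag d n).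

Lemma chain_ge0 k : (1 <= k)%N -> 0 <= g k.
Proof. by case: k => [|[|k]] // _; case: (g_in01 k.+2 isT) => /ltW. Qed.

Lemma chain_lt1 k : (1 <= k)%N -> g k < 1.
Proof. by case: k => [|[|k]] // _; case: (g_in01 k.+2 isT). Qed.

Lemma offdiag_sqr j : (2 <= j <= n)%N -> a j ^+ 2 = d j.
Proof.
case: j => [|j] /andP[j_ge2 j_le]; rewrite /offdiag ?j_ge2 ?j_le //= sqr_sqrtr //.
by rewrite d_chain // mulr_ge0 ?chain_ge0 // subr_ge0 ltW ?chain_lt1.
Qed.

Lemma offdiag_gt0 j : (2 <= j <= n)%N -> 0 < a j.
Proof.
case: j => [|j] /andP[j_ge2 j_le]; rewrite /offdiag ?j_ge2 ?j_le //= sqrtr_gt0.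
rewrite d_chain // mulr_gt0 ?subr_gt0 ?chain_lt1 //.
by case: (g_in01 j.+1 j_ge2).
Qed.

Lemma offdiag_sqr_le k : (1 <= k)%N -> a k.+1 ^+ 2 <= (1 - g k) * g k.+1.
Proof.
move=> k_ge1; have [k_lt|k_ge] := ltnP k n.
  by rewrite offdiag_sqr ?d_chain //; apply/andP.
by rewrite /offdiag (ltnNge k n) k_ge andbF expr0n mulr_ge0 ?chain_ge0 // subr_ge0 ltW ?chain_lt1.
Qed.

Hypothesis z_root : Pval c d z n = 0.
Hypothesis c_gt : forall k, (k < n)%N -> a k.+1 + a k.+2 < c k.+1.

Let s := sqrtc (z ^+ 2 + 1).
Hypothesis s_neq0 : s != 0.

(* Rescaling P_k(z) by s^k sqrt(d_2 ... d_(k+1)) symmetrises the recurrence. *)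
Let pi k := \prod_(j < k) a j.+2.
Let w k := if k is k'.+1 then Pval c d z k' / (s ^+ k' * (pi k')%:C) else 0.

Lemma pi_neq0 k : (k < n)%N -> pi k != 0.
Proof.
move=> k_lt; apply/prodf_neq0 => j _; rewrite gt_eqF // offdiag_gt0 //=.
exact: leq_ltn_trans (ltn_ord j) k_lt.
Qed.

Lemma w1 : w 1 = 1.
Proof. by rewrite /w /pi Pval0 big_ord0 expr0 rmorph1 mulr1 divr1. Qed.

Lemma offdiag_w_succ k : (k < n)%N ->
  (a k.+2)%:C * w k.+2 = Pval c d z k.+1 / (s ^+ k.+1 * (pi k)%:C).
Proof.
move=> k_lt; rewrite /w /pi big_ord_recr /= rmorphM /=.
have [k2_le|] := leqP k.+2 n.
  have a_neq0 : (a k.+2)%:C != 0 by rewrite fmorph_eq0 gt_eqF ?offdiag_gt0 ?k2_le.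
  by field; rewrite a_neq0 expf_neq0 // fmorph_eq0 pi_neq0.
rewrite ltnS => n_le; have -> : k.+1 = n by apply/eqP; rewrite eqn_leq k_lt n_le.
by rewrite z_root /offdiag ltnn andbF !mul0r.
Qed.

Lemma w_eigen k : (k < n)%N ->
  (z - (c k.+1)%:C) * w k.+1 = s * ((a k.+2)%:C * w k.+2 + (a k.+1)%:C * w k).
Proof.
move=> k_lt; rewrite offdiag_w_succ //.
have pi_C k' : (k' < n)%N -> (pi k')%:C != 0 by move=> ?; rewrite fmorph_eq0 pi_neq0.
case: k k_lt => [|k] k_lt.
  rewrite /w /pi Pval0 Pval1 /offdiag /= big_ord0 !mul0r addr0.
  by field.
have a_neq0 : (a k.+2)%:C != 0 by rewrite fmorph_eq0 gt_eqF ?offdiag_gt0.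
have s2 : z ^+ 2 + 1 = s ^+ 2 by rewrite sqr_sqrtc.
rewrite /w PvalS -offdiag_sqr // rmorphXn s2 /pi big_ord_recr /= rmorphM /= !exprS.
by field; rewrite a_neq0 s_neq0 expf_neq0 // pi_C // ltnW.
Qed.

Lemma positive_root_of_sqrt_neq0 : complex.Im z = 0 /\ 0 < complex.Re z.
Proof.
have a1 : a 1 = 0 by [].
have an1 : a n.+1 = 0 by rewrite /offdiag ltnn andbF.
have n_gt0 : (0 < n)%N by apply: ltnW.
have sqnorm_w1 : sqnorm (w 1) = 1 by rewrite w1 /sqnorm /= expr1n expr0n addr0.
have := @symmetric_form_identity R n a w c s z a1 an1 w_eigen.
set N := \sum_(k < n) _; set M := \sum_(k < n) _; set S := \sum_(k < n) _ => identity.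
have N_gt0 : 0 < N.
  have := @ltr_sum_head _ (fun=> 0) (fun k => sqnorm (w k.+1)) n n_gt0.
  by rewrite big1_eq sqnorm_w1; apply=> // k _; apply: sqnorm_ge0.
have S_le_N : `|S| <= N.
  (* d_(k+1) = (1 - g_k) g_(k+1) splits into weights summing to 1 at each k. *)
  pose al k := if k is 0 then 0 else 1 - g k.
  have al_ge0 k : (1 <= k)%N -> 0 <= 1 - g k by move=> k_ge1; rewrite subr_ge0 ltW ?chain_lt1.
  have -> : N = \sum_(k < n) (al k.+1 + g k.+1) * sqnorm (w k.+1).
    by apply: eq_bigr => k _; rewrite /al /= subrK mul1r.
  apply: symmetric_form_bound => [[|k] k_lt|//|].
  - by rewrite a1 expr0n mul0r lexx ?chain_ge0.
  - by rewrite al_ge0 ?chain_ge0 ?offdiag_sqr_le.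
  - by rewrite /al; case: (n) n_ge2 => // n' _; rewrite al_ge0.
have S_lt_M : `|S| < M.
  apply: (le_lt_trans (@symmetric_form_bound R n a w (fun k => a k.+1) a _ a1 _)).
  - by move=> k _; rewrite !offdiag_ge0 expr2 lexx.
  - exact: offdiag_ge0.
  - apply: (@ltr_sum_head _ (fun k => (a k.+2 + a k.+1) * sqnorm (w k.+1))
                            (fun k => c k.+1 * sqnorm (w k.+1))) => // [|k k_lt].
      by rewrite sqnorm_w1 !mulr1 addrC c_gt.
    by rewrite ler_wpM2r ?sqnorm_ge0 // addrC ltW ?c_gt.
exact: real_pos_of_sqrt_identity (sqr_sqrtc _) identity N_gt0 S_le_N S_lt_M.
Qed.

End PositiveRoots.

Lemma Pval_root_real_pos {R : rcfType} {c d : nat -> R} {n} {z : R[i]} :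
  positive_chain_sequence d -> (2 <= n)%N ->
  (forall k, (k < n)%N -> offdiag d n k.+1 + offdiag d n k.+2 < c k.+1) ->
  Pval c d z n = 0 -> complex.Im z = 0 /\ 0 < complex.Re z.
Proof.
case=> g [g1_ge0 g1_lt1 g_in01 d_chain] n_ge2 c_gt z_root.
have [/eqP|] := eqVneq (sqrtc (z ^+ 2 + 1)) 0.
  by rewrite sqrtc_eq0 => /eqP/(Pval_neq0 _ c d _ n); rewrite z_root eqxx.
exact: (@positive_root_of_sqrt_neq0 R c d g n z).
Qed.

Lemma offdiag_sum_lt {R : rcfType} {c d : nat -> R} {n} : (2 <= n)%N ->
  Num.sqrt (d 2%N) < c 1%N ->
  (forall j, (2 <= j <= n.-1)%N -> Num.sqrt (d j) + Num.sqrt (d j.+1) < c j) ->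
  Num.sqrt (d n) < c n ->
  forall k, (k < n)%N -> offdiag d n k.+1 + offdiag d n k.+2 < c k.+1.
Proof.
move=> n_ge2 c1 cj cn [|k] k_lt; first by rewrite /offdiag /= n_ge2 add0r.
rewrite /offdiag /= k_lt; have [k2_lt|] := ltnP k.+2 n.
  by apply: cj; rewrite /= -ltnS prednK // ltnW.
move=> n_le; have n_eq : n = k.+2 by apply/eqP; rewrite eqn_leq n_le k_lt.
by rewrite addr0 -n_eq.
Qed.

Theorem theorem2p3 (R : rcfType) (c d : nat -> R) (n : nat) :
  positive_chain_sequence d -> (2 <= n)%N ->
  ((Num.sqrt (d 2%N) < c 1%N /\
    (forall j, (2 <= j <= n.-1)%N -> Num.sqrt (d j) + Num.sqrt (d j.+1) < c j) /\
    Num.sqrt (d n) < c n) ->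
   forall z : R[i], root (map_poly (fun a : R => a%:C) (P c d n)) z ->
     Im z = 0 /\ 0 < Re z) /\
  ((c 1%N < - Num.sqrt (d 2%N) /\
    (forall j, (2 <= j <= n.-1)%N -> c j < - Num.sqrt (d j) - Num.sqrt (d j.+1)) /\
    c n < - Num.sqrt (d n)) ->
   forall z : R[i], root (map_poly (fun a : R => a%:C) (P c d n)) z ->
     Im z = 0 /\ Re z < 0).
Proof.
move=> chain n_ge2; split=> -[c1 [cj cn]] z /rootP z_root; rewrite -complexIm -complexRe;
  change (Pval c d z n = 0) in z_root.
  have [-> Re_gt0] := Pval_root_real_pos chain n_ge2 (offdiag_sum_lt n_ge2 c1 cj cn) z_root.
  by rewrite ltcR.
have c_opp_gt := @offdiag_sum_lt R (fun j => - c j) d n n_ge2.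
have z_root_opp : Pval (fun j => - c j) d (- z) n = 0 by rewrite Pval_opp z_root mulr0.
have [] := Pval_root_real_pos chain n_ge2 (c_opp_gt _ _ _) z_root_opp.
- by rewrite ltrNr.
- by move=> j /cj; rewrite ltrNr opprD.
- by rewrite ltrNr.
case: z {z_root z_root_opp} => x y /= /eqP; rewrite oppr_eq0 oppr_gt0 => /eqP -> x_lt0.
by rewrite ltcR.
Qed.
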